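(* Consider the ''AME(3,d) quantum bit commitment'' protocol described in the context, for any integer $d\ge 2$. Then: (i) (Perfect hiding) Suppose Alice chooses $b\in\{0,1\}$ uniformly at random and follows the commit phase honestly. Then, whatever state Bob prepares in Step 1 (an arbitrary, possibly dishonest, state on $\texttt{anc}\otimes\mathcal{A}\otimes\mathcal{B}$, with $\mathcal B$ possibly enlarged by an arbitrary register of Bob), Bob cannot guess $b$ before the opening phase with probability larger than $1/2$. Equivalently, the commit channels $\mathcal M_0$ and $\mathcal M_1$ defined in the context satisfy $\mathcal M_0(\rho)=\mathcal M_1(\rho)$ for every state $\rho$. (ii) ($1/d$-honest-binding) If Alice is restricted to separable operations on her register $\mathcal{A}$, then $\max\{p_s(0),p_s(1)\}\le 1/d$, where $p_s(b)$ is defined in the context.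
   Context: Let $d\ge2$, $\omega=e^{2\pi i/d}$, and let $\{|k\rangle\}_{k=0}^{d-1}$ be the computational basis of $\mathbb C^d$ (arithmetic on labels mod $d$). Define $|\tilde k\rangle=\frac{1}{\sqrt d}\sum_{l=0}^{d-1}\omega^{-kl}|l\rangle$. For a permutation $\pi\in S_d$ of $\{0,\dots,d-1\}$ set $\mathbf B_{1,\pi}=\{|\pi(k)\rangle\}_k$ and $\mathbf B_{0,\pi}=\{|\widetilde{\pi(k)}\rangle\}_k$. Registers: $\texttt{anc}\cong\mathbb C^d$; Alice's register $\mathcal A=(\mathbb C^d)^{\otimes 3}$ (three qudits); Bob's register $\mathcal B\cong\mathbb C^d$. For $l\in\{0,\dots,d-1\}$ let $|\Phi_l\rangle=\frac1{\sqrt d}\sum_{j=0}^{d-1}\omega^{jl}|jjj\rangle_{\mathcal A}|j+l\rangle_{\mathcal B}$. Protocol. Commit phase: (1) Bob prepares $|\Xi\rangle=\frac1{\sqrt d}\sum_{l=0}^{d-1}|l\rangle_{\texttt{anc}}|\Phi_l\rangle_{\mathcal A\mathcal B}$ and sends registers $\texttt{anc}$ and $\mathcal A$ to Alice. (2) Alice picks $\pi\in S_d$ uniformly at random and a bit $b$; to commit $b$ she measures $\texttt{anc}$ in basis $\mathbf B_{b,\pi}$, obtains the basis element with index $m$ (i.e. $|\pi(m)\rangle$ or $|\widetilde{\pi(m)}\rangle$), and announces $m$. In the honest case the resulting state on $\mathcal A\mathcal B$ is $|\Xi^1_{\pi,m}\rangle=|\Phi_{\pi(m)}\rangle$ if $b=1$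 and $|\Xi^0_{\pi,m}\rangle=\frac1{\sqrt d}\sum_{l=0}^{d-1}\omega^{\pi(m)l}|\Phi_l\rangle$ if $b=0$. Opening phase: (3) Alice announces a bit $b'$ and a permutation $\pi'$ and sends register $\mathcal A$ to Bob. (4) Bob projects the state of $\mathcal A\mathcal B$ onto $|\Xi^{b'}_{\pi',m}\rangle$ and accepts iff the projection succeeds. Commit channels (acting on $\texttt{anc}\otimes\mathcal A\otimes\mathcal B$, outcome recorded as $|m\rangle$ in $\texttt{anc}$): $\mathcal M_0(\rho)=\frac1{d!}\sum_{\pi\in S_d}\sum_{m}(|m\rangle\langle\widetilde{\pi(m)}|\otimes I)\rho(|\widetilde{\pi(m)}\rangle\langle m|\otimes I)$ and $\mathcal M_1(\rho)=\frac1{d!}\sum_{\pi\in S_d}\sum_m(|m\rangle\langle\pi(m)|\otimes I)\rho(|\pi(m)\rangle\langle m|\otimes I)$. Separable operations: a channel on $\mathcal A$ is separable with respect to a bipartition $\mathcal A=\mathcal A_1\otimes\mathcal A_2$ (a split of the three qudits into two nonempty groups) if it is a trace-preserving convex combination of tensor products $\mathcal N_1\otimes\mathcal N_2$ of completely positive maps on $\mathcal A_1$ and $\mathcal A_2$; ''Alice is restricted to separable operations'' means that any channel she applies to $\mathcal A$ is separable with respect to some such bipartition (of her choice). Honest-binding: for $b\in\{0,1\}$, $p_s(b)$ is the probability that Alice, having honestly committed to $b$ (with some $\pi$ and outcome $m$), successfully opens $1-b$, i.e. the maximum over allowed channels $\mathcal N$ on $\mathcal A$ and announced permutations $\pi'$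 of the acceptance probability $F\big(|\Xi^{1-b}_{\pi',m}\rangle\langle\Xi^{1-b}_{\pi',m}|,(\mathcal N\otimes\mathrm{id}_{\mathcal B})(|\Xi^b_{\pi,m}\rangle\langle\Xi^b_{\pi,m}|)\big)$, where $F$ is the fidelity ($F(\rho,\sigma)=(\mathrm{Tr}\sqrt{\sqrt\sigma\rho\sqrt\sigma})^2$); the bound is required for all $\pi,m$. A protocol is $\varepsilon$-honest-binding if $\max\{p_s(0),p_s(1)\}\le\varepsilon$. *)

From HB Require Import structures.
From mathcomp Require Import all_boot all_order all_algebra all_fingroup.
From mathcomp Require Import reals trigo.
From mathcomp Require Export complex.
Set Implicit Arguments. Unset Strict Implicit. Unset Printing Implicit Defensive.
Import GRing.Theory Num.Theory.
Local Open Scope ring_scope.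
Local Open Scope complex_scope.

Section QuantumDefs.
Variable R : realType.
Local Notation C := R[i].

(* A Hilbert space C^T with computational basis indexed by the finType T;
   kets are coordinate functions, operators are matrices T x T. *)
Definition ket (T : finType) := T -> C.
Definition op (T : finType) := T -> T -> C.

Definition ketbra (T : finType) (u v : ket T) : op T :=
  fun x y => u x * (v y)^*.
Definition proj (T : finType) (u : ket T) : op T := ketbra u u.
Definition mulop (T : finType) (A B : op T) : op T :=
  fun x y => \sum_(z : T) A x z * B z y.
Definition adj (T : finType) (A : op T) : op T := fun x y => (A y x)^*.
Definition trace (T : finType) (A : op T) : C := \sum_(x : T) A x x.
Definition idop (T : finType) : op T := fun x y => (x == y)%:R.
Definition munit (T : finType) (a b : T) : op T :=
  fun x y => ((x == a) && (y == b))%:R.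
Definition conj_by (T : finType) (K A : op T) : op T :=
  mulop K (mulop A (adj K)).

(* positive semidefinite (complex order: <v, A v> is real and >= 0) *)
Definition psd (T : finType) (A : op T) : Prop :=
  forall v : ket T, 0 <= \sum_(x : T) \sum_(y : T) (v x)^* * A x y * v y.
Definition is_state (T : finType) (rho : op T) : Prop :=
  psd rho /\ trace rho = 1.
Definition povm2 (T : finType) (E0 E1 : op T) : Prop :=
  [/\ psd E0, psd E1 & forall x y, E0 x y + E1 x y = idop x y].

Definition lift1 (T E : finType) (X : op T) : op (T * E)%type :=
  fun x y => X x.1 y.1 * (x.2 == y.2)%:R.

Definition linear_opmap (T T' : finType) (N : op T -> op T') : Prop :=
  forall (a : C) (X Y : op T),
    N (fun x y => a * X x y + Y x y) = fun x y => a * N X x y + N Y x y.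

(* (N (x) id_U)(rho), N extended linearly (via matrix units) *)
Definition tens_id (T T' U : finType) (N : op T -> op T') (rho : op (T * U)%type)
  : op (T' * U)%type :=
  fun x y => \sum_(a : T) \sum_(b : T) N (munit a b) x.1 y.1 * rho (a, x.2) (b, y.2).

Definition cp_map (T T' : finType) (N : op T -> op T') : Prop :=
  linear_opmap N /\
  forall (U : finType) (rho : op (T * U)%type), psd rho -> psd (tens_id N rho).

Definition trace_preserving (T T' : finType) (N : op T -> op T') : Prop :=
  forall X : op T, trace (N X) = trace X.

Variable d : nat.

Definition omega : C := cos (2 * pi / d%:R) +i* sin (2 * pi / d%:R).
Definition sqrtd : C := (Num.sqrt (d%:R : R))%:C.

Definition addI (j l : 'I_d) : 'I_d := insubd j ((j + l) %% d)%N.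

Definition cbasis (k : 'I_d) : ket 'I_d := fun l => (l == k)%:R.
Definition fbasis (k : 'I_d) : ket 'I_d :=
  fun l => sqrtd^-1 * omega ^- (k * l).
Definition basisB (b : bool) (p : {perm 'I_d}) (k : 'I_d) : ket 'I_d :=
  if b then cbasis (p k) else fbasis (p k).

(* commit channel M_b on anc (x) E (E = all other registers, including A, B
   and any register of Bob); outcome m recorded as |m> in anc *)
Definition commit (E : finType) (b : bool) (rho : op ('I_d * E)%type) : op ('I_d * E)%type :=
  fun x y => ((d`!)%:R)^-1 * \sum_(p : {perm 'I_d}) \sum_(m : 'I_d)
      conj_by (lift1 (E:=E) (ketbra (cbasis m) (basisB b p m))) rho x y.

Definition guess_prob (E : finType) (rho : op ('I_d * E)%type) (E0 E1 : op ('I_d * E)%type) : C :=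
  2^-1 * trace (mulop E0 (commit false rho)) + 2^-1 * trace (mulop E1 (commit true rho)).

Definition Areg := {ffun 'I_3 -> 'I_d}.
Definition cst3 (j : 'I_d) : Areg := [ffun _ => j].

Definition Phi (l : 'I_d) : ket (Areg * 'I_d)%type :=
  fun x => sqrtd^-1 * \sum_(j : 'I_d)
     omega ^+ (j * l) * ((x.1 == cst3 j) && (x.2 == addI j l))%:R.

Definition Xi (b : bool) (p : {perm 'I_d}) (m : 'I_d) : ket (Areg * 'I_d)%type :=
  if b then Phi (p m)
  else fun x => sqrtd^-1 * \sum_(l : 'I_d) omega ^+ (p m * l) * Phi l x.

(* fidelity F(|psi><psi|, sigma) with a pure first argument = <psi|sigma|psi> *)
Definition fid_pure (T : finType) (psi : ket T) (sigma : op T) : C :=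
  \sum_(x : T) \sum_(y : T) (psi x)^* * sigma x y * psi y.

Definition loc (S : {set 'I_3}) := {ffun {i : 'I_3 | i \in S} -> 'I_d}.
Definition res (S : {set 'I_3}) (x : Areg) : loc S := [ffun i => x (val i)].

(* N1 (x) N2 w.r.t. the bipartition A = A_S (x) A_{~S} *)
Definition tensS (S : {set 'I_3})
  (N1 : op (loc S) -> op (loc S)) (N2 : op (loc (~: S)) -> op (loc (~: S)))
  (X : op Areg) : op Areg :=
  fun x y => \sum_(a : Areg) \sum_(b : Areg)
    X a b * N1 (munit (res S a) (res S b)) (res S x) (res S y)
          * N2 (munit (res (~: S) a) (res (~: S) b)) (res (~: S) x) (res (~: S) y).

Definition separable_channel (N : op Areg -> op Areg) : Prop :=
  exists S : {set 'I_3}, [/\ S != set0, ~: S != set0 &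
    exists (n : nat) (w : 'I_n -> R)
           (N1 : 'I_n -> op (loc S) -> op (loc S))
           (N2 : 'I_n -> op (loc (~: S)) -> op (loc (~: S))),
      [/\ forall i, 0 <= w i /\ cp_map (N1 i) /\ cp_map (N2 i),
          \sum_(i < n) w i = 1,
          N = (fun X x y => \sum_(i < n) (w i)%:C * tensS (N1 i) (N2 i) X x y)
        & trace_preserving N]].

End QuantumDefs.

(* Hiding: averaging over the relabelling [pi] makes the outcome [m] uniform,
   and each basis [B_(b,pi)] is orthonormal, so both commit channels equal
   [rho |-> (I/d) (x) Tr_anc rho]; Bob's state does not depend on [b].

   Binding: both honest states have the form [sum_j |jjj> (x) |phi_j>], so the
   fidelity is the quadratic form, at the overlaps [<phi_j|phi'_k>], of the
   block [G] of Alice's channel [N] taking [|jjj><j'j'j'|] to the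
   [|kkk><k'k'k'|] entry.  The fibers of [Phi_l] have one entry of modulus
   [d^(-1/2)] and those of [Xi^0] all entries of modulus [1/d], so every
   overlap is at most [d^(-3/2)].  For [N = sum_i w_i N1_i (x) N2_i] across a
   bipartition, the entries of [G] factor through the Choi matrices of
   [N1_i] and [N2_i]; Cauchy-Schwarz for these positive matrices and trace
   preservation at [|jjj><jjj|] give [sum |G| <= d^2], so the fidelity is at
   most [d^(-3) d^2 = 1/d]. *)

From mathcomp Require Import all_boot all_order all_algebra all_fingroup.
From mathcomp Require Import reals trigo.
From mathcomp Require Import complex.
From mathcomp Require Import ring lra zify.
From mathcomp Require Import boolp.
Import Order.TTheory GRing.Theory Num.Theory.
Set Implicit Arguments. Unset Strict Implicit. Unset Printing Implicit Defensive.
Local Open Scope complex_scope.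
Local Open Scope ring_scope.

Section ComplexSums.
Variable R : realType.
Local Notation C := R[i].

Lemma conjCE (x : C) : x^* = conjc x.
Proof. by case: x. Qed.

Lemma norm1_conjC (z : C) : `|z| = 1 -> z^* = z^-1.
Proof.
move=> z1; have z0 : z != 0 by rewrite -normr_eq0 z1 oner_eq0.
by apply: (mulfI z0); rewrite divff // -normCK z1 expr1n.
Qed.

Lemma sum_unity_root_expr (z : C) (n : nat) :
  z ^+ n = 1 -> z != 1 -> \sum_(k < n) z ^+ k = 0.
Proof.
move=> zn z1; have /eqP := subrX1 z n.
by rewrite zn subrr eq_sym mulf_eq0 subr_eq0 (negbTE z1) /= => /eqP.
Qed.

Lemma sum_deltal (T : finType) (x : T) (F : T -> C) : \sum_z (z == x)%:R * F z = F x.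
Proof.
by rewrite (bigD1 x) //= eqxx mul1r big1 ?addr0 // => z /negbTE ->; rewrite mul0r.
Qed.

Lemma sum_deltar (T : finType) (x : T) (F : T -> C) : \sum_z F z * (z == x)%:R = F x.
Proof. by rewrite -[RHS](sum_deltal x); apply: eq_bigr => z _; rewrite mulrC. Qed.

Lemma sum_pair (T J : finType) (F : T * J -> C) :
  \sum_z F z = \sum_i \sum_j F (i, j).
Proof. by rewrite pair_bigA; apply: eq_bigr => -[]. Qed.

Lemma sum_pair_deltal (T J : finType) (j0 : J) (F : T * J -> C) :
  \sum_(z : T * J) (j0 == z.2)%:R * F z = \sum_i F (i, j0).
Proof.
rewrite sum_pair; apply: eq_bigr => i _; under eq_bigr => j _ do rewrite eq_sym.
exact: sum_deltal.
Qed.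

End ComplexSums.

Section RootsOfUnity.
Variable R : realType.
Local Notation C := R[i].
Variable d : nat.
Hypothesis hd : (2 <= d)%N.
Local Notation w := (omega R d).

Lemma omegaX n :
  w ^+ n = cos (n%:R * (2 * pi / d%:R)) +i* sin (n%:R * (2 * pi / d%:R)).
Proof.
elim: n => [|n IH]; first by rewrite expr0 mul0r cos0 sin0.
rewrite exprS IH /omega /=; set th := 2 * pi / _.
rewrite -natr1 mulrDl mul1r cosD sinD.
by congr (_ +i* _); ring.
Qed.

Lemma norm_omega : `|w| = 1.
Proof. by rewrite /omega normc_def /= cos2Dsin2 sqrtr1. Qed.

(* [w ^+ n = 1] makes [sin] vanish at [2 pi n / d], which lies in [(0, 2 pi)],
   hence equals [pi], where [cos] is [-1]. *)
Lemma omegaX_neq1 n : (0 < n < d)%N -> w ^+ n != 1.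
Proof.
move=> /andP[n0 nd]; rewrite omegaX.
have d0 : 0 < d%:R :> R by rewrite ltr0n; lia.
set x := _ * _.
have x0 : 0 < x by rewrite mulr_gt0 ?ltr0n ?divr_gt0 ?mulr_gt0 ?pi_gt0.
have x2pi : x < pi *+ 2.
  have nd1 : n%:R / d%:R < 1 :> R by rewrite ltr_pdivrMr // mul1r ltr_nat.
  have -> : x = 2 * pi * (n%:R / d%:R) by rewrite /x; field; rewrite gt_eqF.
  by have := pi_gt0 R; rewrite -mulr_natl; nra.
apply/negP => /eqP[hc hs].
have [xpi|xpi|xpi] := ltrgtP x pi.
- by have := @sin_gt0_pi _ x; rewrite x0 xpi hs ltxx => /(_ isT).
- have : 0 < sin (x - pi) by apply: sin_gt0_pi; rewrite subr_gt0 //; lra.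
  have := sinDpi (x - pi); rewrite subrK hs => /eqP; rewrite eq_sym oppr_eq0 => /eqP ->.
  by rewrite ltxx.
- by move: hc; rewrite xpi cospi; lra.
Qed.

Lemma omega_prim : d.-primitive_root w.
Proof.
have wd : w ^+ d = 1.
  rewrite omegaX mulrCA divff ?pnatr_eq0 -?lt0n ?mulr1 1?ltnW //.
  by rewrite mulr_natl cos2pi sin2pi.
have [m wm md] := prim_order_exists (ltnW hd) wd.
have m0 := prim_order_gt0 wm.
suff md' : m = d by move: wm; rewrite md'.
have mled : (m <= d)%N by apply: dvdn_leq => //; lia.
apply/eqP; rewrite eqn_leq mled /= leqNgt; apply/negP => mlt.
by move: (omegaX_neq1 (n := m)); rewrite m0 mlt prim_expr_order // eqxx => /(_ isT).
Qed.

Lemma omega_neq0 : w != 0.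
Proof. by rewrite (prim_root_eq0 omega_prim); case: d hd. Qed.

Lemma norm_omegaX n : `|w ^+ n| = 1.
Proof. by rewrite normrX norm_omega expr1n. Qed.

Lemma conj_omegaNX n : (w ^- n)^* = w ^+ n.
Proof.
by rewrite norm1_conjC ?invrK // normrV ?unitfE ?expf_neq0 ?omega_neq0 // norm_omegaX invr1.
Qed.

Lemma sum_omega_orth (a b : 'I_d) :
  \sum_(k < d) w ^+ (k * a) * w ^- (k * b) = (a == b)%:R * d%:R.
Proof.
have -> : \sum_(k < d) w ^+ (k * a) * w ^- (k * b) = \sum_(k < d) (w ^+ a / w ^+ b) ^+ k.
  by apply: eq_bigr => k _; rewrite exprMn exprVn -!exprM !(mulnC k).
have [<-|ab] := eqVneq a b.
  rewrite divff ?expf_neq0 ?omega_neq0 // mul1r.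
  by under eq_bigr do rewrite expr1n; rewrite sumr_const card_ord.
rewrite mul0r sum_unity_root_expr //.
  rewrite exprMn exprVn -!exprM !(mulnC _ d) !exprM (prim_expr_order omega_prim).
  by rewrite !expr1n divr1.
apply: contra ab => /eqP/(congr1 ( *%R^~ (w ^+ b))).
rewrite divfK ?expf_neq0 ?omega_neq0 // mul1r => /eqP.
by rewrite (eq_prim_root_expr omega_prim) !modn_small // => /eqP/val_inj ->.
Qed.

End RootsOfUnity.

Section Sqrtd.
Variable R : realType.
Local Notation C := R[i].
Variable d : nat.
Hypothesis hd : (2 <= d)%N.
Local Notation s := (sqrtd R d).

Lemma natd_neq0 : d%:R != 0 :> C.
Proof. by rewrite pnatr_eq0; case: d hd. Qed.

Lemma sqrtd_gt0 : 0 < s.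
Proof. by rewrite /sqrtd ltcR sqrtr_gt0 ltr0n; lia. Qed.

Lemma sqrtd_neq0 : s != 0.
Proof. by rewrite gt_eqF ?sqrtd_gt0. Qed.

Lemma sqrtd_sqr : s ^+ 2 = d%:R.
Proof. by rewrite /sqrtd -rmorphXn /= sqr_sqrtr ?ler0n // rmorph_nat. Qed.

Lemma invsqrtd_sqr : s^-1 * s^-1 = d%:R^-1.
Proof. by rewrite -invfM -expr2 sqrtd_sqr. Qed.

Lemma conj_sqrtd : s^* = s.
Proof. by rewrite conjCE /sqrtd conjc_real. Qed.

Lemma norm_invsqrtd : `|s^-1| = s^-1.
Proof. by rewrite ger0_norm // invr_ge0 /sqrtd lecR sqrtr_ge0. Qed.

End Sqrtd.

Section PositiveOperators.
Variable R : realType.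
Local Notation C := R[i].

Lemma psd_proj (T : finType) (u : ket R T) : psd (proj u).
Proof.
move=> v.
have -> : \sum_x \sum_y (v x)^* * proj u x y * v y =
    (\sum_x (v x)^* * u x) * (\sum_x (v x)^* * u x)^*.
  rewrite mulr_suml; apply: eq_bigr => x _.
  rewrite rmorph_sum mulr_sumr; apply: eq_bigr => y _.
  by rewrite /proj /ketbra rmorphM /= conjCK; ring.
exact: mul_conjC_ge0.
Qed.

(* [f] need not be injective: test vectors are pushed forward along [f]. *)
Lemma psd_comp (T U : finType) (f : U -> T) (A : op R T) :
  psd A -> psd (fun x y => A (f x) (f y)).
Proof.
move=> psdA v; pose u a := \sum_(x | f x == a) v x.
have -> : \sum_x \sum_y (v x)^* * A (f x) (f y) * v y =
    \sum_a \sum_b (u a)^* * A a b * u b; last exact: psdA.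
rewrite (partition_big f predT) //=; apply: eq_bigr => a _.
transitivity (\sum_b \sum_(x | f x == a) (v x)^* * A a b * u b); last first.
  by apply: eq_bigr => b _; rewrite rmorph_sum !mulr_suml.
rewrite [RHS]exchange_big /=; apply: eq_bigr => x /eqP <-.
rewrite (partition_big f predT) //=; apply: eq_bigr => b _.
by rewrite mulr_sumr; apply: eq_bigr => y /eqP <-.
Qed.

Lemma psd_quad2 (T : finType) (A : op R T) (x y : T) (a b : C) : psd A ->
  0 <= a^* * a * A x x + a^* * b * A x y + b^* * a * A y x + b^* * b * A y y.
Proof.
pose v z := (z == x)%:R * a + (z == y)%:R * b.
have sumv (F : T -> C) : \sum_z F z * v z = F x * a + F y * b.
  rewrite (eq_bigr (fun z => (z == x)%:R * (F z * a) + (z == y)%:R * (F z * b))).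
    by rewrite big_split /= !sum_deltal.
  by move=> z _; rewrite /v; ring.
have sumvc (F : T -> C) : \sum_z (v z)^* * F z = a^* * F x + b^* * F y.
  rewrite (eq_bigr (fun z => (z == x)%:R * (a^* * F z) + (z == y)%:R * (b^* * F z))).
    by rewrite big_split /= !sum_deltal.
  by move=> z _; rewrite /v rmorphD !rmorphM /= !conjC_nat; ring.
move=> /(_ v); congr (0 <= _).
rewrite (eq_bigr (fun z => (v z)^* * (A z x * a + A z y * b))); last first.
  by move=> z _; rewrite -sumv mulr_sumr; apply: eq_bigr => u _; rewrite mulrA.
by rewrite sumvc; ring.
Qed.

Lemma psd_minor2 (T : finType) (A : op R T) (x y : T) : psd A ->
  [/\ 0 <= A x x, A y x = (A x y)^* & `|A x y| ^+ 2 <= A x x * A y y].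
Proof.
move=> /psd_quad2 q; move: {q}(q x y); rewrite -add_Re2_Im2 !conjCE.
case: (A x x) => p1 p2; case: (A x y) => c1 c2; case: (A y x) => e1 e2.
case: (A y y) => q1 q2 => q.
move: (q 1 0) (q 0 1) (q 1 1) (q 1 'i) (q (q1 +i* 0) ((-c1) +i* c2))
  (q ((-c1) +i* (-c2)) (p1 +i* 0)) (q 1 ((-c1) +i* c2)).
rewrite !conjCE !lecE /= => /andP[/eqP H1 G1] /andP[/eqP H2 G2] /andP[/eqP H3 G3]
  /andP[/eqP H4 G4] /andP[_ G5] /andP[_ G6] /andP[_ G7].
have P2 : p2 = 0 by lra.
have Q2 : q2 = 0 by lra.
have E1 : e1 = c1 by lra.
have E2 : e2 = - c2 by lra.
subst p2 q2 e1 e2; split => //; first by rewrite eqxx /=; lra.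
apply/andP; split; first by apply/eqP; lra.
rewrite mul0r subr0.
set n := c1 ^+ 2 + c2 ^+ 2.
have n0 : 0 <= n by rewrite /n addr_ge0 // sqr_ge0.
have G5' : 0 <= q1 * (q1 * p1 - n) by rewrite /n; lra.
have G6' : 0 <= p1 * (p1 * q1 - n) by rewrite /n; lra.
have G7' : 0 <= p1 + q1 * n - 2 * n by rewrite /n; lra.
have [q0|q0] : q1 = 0 \/ 0 < q1 by lra.
  subst q1; rewrite mulr0.
  have [p0|p0] : p1 = 0 \/ 0 < p1 by lra.
    by subst p1; lra.
  nra.
nra.
Qed.

Definition choi (T T' : finType) (N : op R T -> op R T') : op R (T' * T)%type :=
  fun x y => N (munit R x.2 y.2) x.1 y.1.

Lemma choi_psd (T T' : finType) (N : op R T -> op R T') : cp_map N -> psd (choi N).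
Proof.
move=> [_ cpN]; pose Om : ket R (T * T)%type := fun x => (x.1 == x.2)%:R.
suff -> : choi N = tens_id N (proj Om) by exact/cpN/psd_proj.
apply/funext => x; apply/funext => y; rewrite /choi /tens_id /proj /ketbra /Om /=.
rewrite -(sum_deltar x.2 (fun a => N (munit R a y.2) x.1 y.1)); apply: eq_bigr => a _.
rewrite -(sum_deltar y.2 (fun b => N (munit R a b) x.1 y.1 * (a == x.2)%:R)).
by apply: eq_bigr => b _; rewrite conjC_nat; ring.
Qed.

End PositiveOperators.

Lemma card_perm_type (T : finType) : #|{perm T}| = #|T|`!.
Proof.
rewrite (eq_card (B := perm_on [set: T])); first by rewrite card_perm cardsT.
by move=> p; rewrite inE unfold_in /perm_on /=; apply/esym/subsetP => i _; rewrite inE.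
Qed.

Lemma sum_perm_eval (T : finType) (V : nmodType) (x : T) (f : T -> V) :
  (\sum_(p : {perm T}) f (p x)) *+ #|T| = (\sum_y f y) *+ #|T|`!.
Proof.
have indep x' : \sum_(p : {perm T}) f (p x) = \sum_(p : {perm T}) f (p x').
  rewrite [RHS](reindex_inj (mulgI (tperm x x'))) /=.
  by apply: eq_bigr => p _; rewrite permM tpermR.
rewrite -sumr_const (eq_bigr _ (fun x' _ => indep x')) exchange_big /=.
rewrite -card_perm_type -sumr_const; apply: eq_bigr => p _.
by rewrite [RHS](reindex_inj (@perm_inj _ p)).
Qed.

Section Hiding.
Variable R : realType.
Local Notation C := R[i].
Variable d : nat.
Hypothesis hd : (2 <= d)%N.
Local Notation w := (omega R d).
Local Notation s := (sqrtd R d).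

Definition basis_vec (b : bool) (k : 'I_d) : ket R 'I_d :=
  if b then cbasis R k else fbasis R k.

Lemma basisB_vec b p m : basisB R b p m = basis_vec b (p m).
Proof. by case: b. Qed.

Lemma basis_vec_complete b (z u : 'I_d) :
  \sum_k (basis_vec b k z)^* * basis_vec b k u = (z == u)%:R.
Proof.
case: b; rewrite /basis_vec.
  under eq_bigr => k _ do rewrite /cbasis conjC_nat eq_sym.
  by rewrite sum_deltal eq_sym.
rewrite /fbasis (eq_bigr (fun k : 'I_d => s^-1 * s^-1 * (w ^+ (k * z) * w ^- (k * u)))).
  by rewrite -mulr_sumr sum_omega_orth // invsqrtd_sqr mulrCA mulVf ?natd_neq0 ?mulr1.
move=> k _; rewrite rmorphM /= conj_omegaNX // rmorphV ?unitfE ?sqrtd_neq0 //=.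
by rewrite conj_sqrtd; ring.
Qed.

Variable E : finType.
Implicit Types rho : op R ('I_d * E)%type.

Lemma conj_by_lift_ketbra (v : ket R 'I_d) m rho x y :
  conj_by (lift1 (ketbra (cbasis R m) v)) rho x y =
  (x.1 == m)%:R * (y.1 == m)%:R *
    \sum_z \sum_u (v z)^* * v u * rho (z, x.2) (u, y.2).
Proof.
rewrite /conj_by /mulop /adj /lift1 /ketbra /cbasis.
have inner z : \sum_u rho z u * ((y.1 == m)%:R * (v u.1)^* * (y.2 == u.2)%:R)^*
    = (y.1 == m)%:R * \sum_u1 v u1 * rho z (u1, y.2).
  rewrite (eq_bigr (fun u => (y.2 == u.2)%:R * ((y.1 == m)%:R * (v u.1 * rho z u)))).
    by rewrite sum_pair_deltal mulr_sumr.
  by move=> u _; rewrite !rmorphM /= !conjC_nat conjCK; ring.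
under eq_bigr => z _ do rewrite inner.
rewrite (eq_bigr (fun z => (x.2 == z.2)%:R * ((x.1 == m)%:R * (y.1 == m)%:R *
           ((v z.1)^* * \sum_u1 v u1 * rho z (u1, y.2))))); last by move=> z _; ring.
rewrite sum_pair_deltal -mulr_sumr; congr (_ * _); apply: eq_bigr => z _ /=.
by rewrite mulr_sumr; apply: eq_bigr => u _; rewrite mulrA.
Qed.

Lemma commitE b rho x y :
  commit b rho x y = (x.1 == y.1)%:R * (d%:R^-1 * \sum_z rho (z, x.2) (z, y.2)).
Proof.
pose Q k := \sum_z \sum_u (basis_vec b k z)^* * basis_vec b k u * rho (z, x.2) (u, y.2).
have sum_m (p : {perm 'I_d}) :
    \sum_m conj_by (lift1 (ketbra (cbasis R m) (basisB R b p m))) rho x y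
    = (x.1 == y.1)%:R * Q (p x.1).
  under eq_bigr => m _ do rewrite conj_by_lift_ketbra basisB_vec -/(Q _).
  rewrite (eq_bigr (fun m => (m == x.1)%:R * ((y.1 == m)%:R * Q (p m)))).
    by rewrite sum_deltal eq_sym.
  by move=> m _; rewrite eq_sym mulrA.
have sumQ : \sum_k Q k = \sum_z rho (z, x.2) (z, y.2).
  rewrite exchange_big; apply: eq_bigr => z _ /=; rewrite exchange_big /=.
  rewrite -(sum_deltal z (fun u => rho (z, x.2) (u, y.2))); apply: eq_bigr => u _.
  by rewrite -mulr_suml basis_vec_complete eq_sym.
have avgQ : \sum_(p : {perm 'I_d}) Q (p x.1) = (d`!)%:R / d%:R * \sum_k Q k.
  apply: (mulfI (natd_neq0 R hd)); rewrite mulrA [_ * (_ / _)]mulrC divfK ?natd_neq0 //.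
  by rewrite !mulr_natl; have := sum_perm_eval x.1 Q; rewrite card_ord => ->.
rewrite /commit (eq_bigr _ (fun p _ => sum_m p)) -mulr_sumr avgQ sumQ.
by field; rewrite (natd_neq0 R hd) pnatr_eq0 -lt0n fact_gt0.
Qed.

Lemma commit_hiding rho : commit false rho = commit true rho.
Proof. by apply/funext => x; apply/funext => y; rewrite !commitE. Qed.

Lemma trace_commit b rho : trace (commit b rho) = trace rho.
Proof.
rewrite /trace !sum_pair.
under eq_bigr => z _ do under eq_bigr => e _ do rewrite commitE /= eqxx mul1r.
rewrite exchange_big [RHS]exchange_big /=; apply: eq_bigr => e _.
by rewrite sumr_const card_ord -mulrnAl -mulr_natr mulVf ?natd_neq0 ?mul1r.
Qed.

Lemma trace_povm2 (E0 E1 X : op R ('I_d * E)%type) :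
  povm2 E0 E1 -> trace (mulop E0 X) + trace (mulop E1 X) = trace X.
Proof.
move=> [_ _ sumE]; rewrite /trace /mulop -big_split /=; apply: eq_bigr => x _.
rewrite -big_split /= -[RHS](sum_deltal x (fun z => X z x)).
by apply: eq_bigr => z _; rewrite -mulrDl sumE /idop eq_sym.
Qed.

Lemma guess_prob_half rho E0 E1 :
  trace rho = 1 -> povm2 E0 E1 -> guess_prob rho E0 E1 = 2^-1.
Proof.
move=> tr1 povmE.
by rewrite /guess_prob commit_hiding -mulrDr trace_povm2 // trace_commit tr1 mulr1.
Qed.

End Hiding.

Section GhzExpansion.
Variable R : realType.
Local Notation C := R[i].
Variable d : nat.
Local Notation A := (Areg d).
Local Notation I2 := ('I_d * 'I_d)%type.

Definition ghz_expansion (psi : ket R (A * 'I_d)%type) (phi : 'I_d -> ket R 'I_d) :=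
  forall x, psi x = \sum_j (x.1 == cst3 j)%:R * phi j x.2.

Definition ghz_block (N : op R A -> op R A) : op R I2 :=
  fun x y => choi N (cst3 x.1, cst3 x.2) (cst3 y.1, cst3 y.2).

Lemma ghz_expansion_conj psi phi : ghz_expansion psi phi ->
  ghz_expansion (fun x => (psi x)^*) (fun j z => (phi j z)^*).
Proof.
move=> psiE x; rewrite psiE rmorph_sum; apply: eq_bigr => j _.
by rewrite rmorphM /= conjC_nat.
Qed.

Lemma sum_ghz psi phi (F : A -> C) z : ghz_expansion psi phi ->
  \sum_a F a * psi (a, z) = \sum_k F (cst3 k) * phi k z.
Proof.
move=> psiE; under eq_bigr => a _ do rewrite psiE mulr_sumr.
rewrite exchange_big; apply: eq_bigr => k _ /=.
by rewrite -(sum_deltal (cst3 k) (fun a => F a * phi k z)); apply: eq_bigr => a _; ring.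
Qed.

Lemma sum2_ghz psi phi psi' phi' (F : A -> A -> C) z z' :
  ghz_expansion psi phi -> ghz_expansion psi' phi' ->
  \sum_a \sum_b psi (a, z) * F a b * psi' (b, z') =
  \sum_k \sum_k' phi k z * F (cst3 k) (cst3 k') * phi' k' z'.
Proof.
move=> psiE psiE'.
transitivity (\sum_a (\sum_k' F a (cst3 k') * phi' k' z') * psi (a, z)).
  by apply: eq_bigr => a _; rewrite -(sum_ghz _ _ psiE') mulr_suml; apply: eq_bigr => b _; ring.
rewrite (sum_ghz _ _ psiE); apply: eq_bigr => k _.
by rewrite mulr_suml; apply: eq_bigr => k' _; ring.
Qed.

Lemma fid_ghz psi phi psi' phi' (N : op R A -> op R A) :
  ghz_expansion psi phi -> ghz_expansion psi' phi' ->
  fid_pure psi' (tens_id N (proj psi)) =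
  fid_pure (fun x : I2 => \sum_z (phi x.2 z)^* * phi' x.1 z) (ghz_block N).
Proof.
move=> psiE psiE'.
pose X x y z u := (phi' x.1 z)^* * phi x.2 z * ghz_block N x y * (phi y.2 u)^* * phi' y.1 u.
transitivity (\sum_z \sum_u \sum_(x : I2) \sum_(y : I2) X x y z u); last first.
  under eq_bigr => z _ do rewrite exchange_big.
  rewrite exchange_big; apply: eq_bigr => x _.
  under eq_bigr => z _ do rewrite exchange_big.
  rewrite exchange_big; apply: eq_bigr => y _.
  rewrite rmorph_sum !mulr_suml; apply: eq_bigr => z _; rewrite mulr_sumr; apply: eq_bigr => u _.
  by rewrite rmorphM /= conjCK /X; ring.
rewrite /fid_pure /tens_id /proj /ketbra sum_pair exchange_big; apply: eq_bigr => z _.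
under eq_bigr => x1 _ do rewrite sum_pair exchange_big.
rewrite exchange_big; apply: eq_bigr => u _ /=.
rewrite (sum2_ghz _ _ _ (ghz_expansion_conj psiE') psiE').
rewrite [RHS]sum_pair; apply: eq_bigr => k _.
under [RHS]eq_bigr => j _ do rewrite sum_pair.
rewrite [RHS]exchange_big; apply: eq_bigr => k' _ /=.
have -> : \sum_a \sum_b N (munit R a b) (cst3 k) (cst3 k') * (psi (a, z) * (psi (b, u))^*) =
    \sum_j \sum_j' phi j z * ghz_block N (k, j) (k', j') * (phi j' u)^*.
  rewrite -(sum2_ghz (fun a b => N (munit R a b) (cst3 k) (cst3 k')) _ _ psiE
    (ghz_expansion_conj psiE)).
  by apply: eq_bigr => a _; apply: eq_bigr => b _; ring.
rewrite mulr_sumr mulr_suml; apply: eq_bigr => j _.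
by rewrite mulr_sumr mulr_suml; apply: eq_bigr => j' _; rewrite /X; ring.
Qed.

End GhzExpansion.

Section Estimates.
Variable R : realType.
Local Notation C := R[i].

Lemma fid_pure_real (T : finType) (h : ket R T) (G : op R T) :
  (forall x y, G y x = (G x y)^*) -> fid_pure h G \is Num.real.
Proof.
move=> hermG; rewrite CrealE /fid_pure rmorph_sum exchange_big /=; apply/eqP.
apply: eq_bigr => y _; rewrite rmorph_sum; apply: eq_bigr => x _.
by rewrite !rmorphM /= conjCK -hermG; ring.
Qed.

Lemma fid_pure_le (T : finType) (h : ket R T) (G : op R T) (g : C) :
  (forall x y, G y x = (G x y)^*) -> (forall x, `|h x| <= g) ->
  fid_pure h G <= g ^+ 2 * \sum_x \sum_y `|G x y|.
Proof.
move=> hermG hg; apply: le_trans (real_ler_norm (fid_pure_real h hermG)) _.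
apply: le_trans (ler_norm_sum _ _ _) _; rewrite mulr_sumr; apply: ler_sum => x _.
apply: le_trans (ler_norm_sum _ _ _) _; rewrite mulr_sumr; apply: ler_sum => y _.
have g0 : 0 <= g := le_trans (normr_ge0 _) (hg x).
rewrite !normrM norm_conjC expr2 mulrAC.
by rewrite ler_wpM2r // ler_pM ?mulr_ge0 ?normr_ge0.
Qed.

Lemma norm_inner_le (T : finType) (u v : ket R T) (g : C) :
  (forall z, `|u z| <= g) -> `|\sum_z (u z)^* * v z| <= g * \sum_z `|v z|.
Proof.
move=> ug; apply: le_trans (ler_norm_sum _ _ _) _; rewrite mulr_sumr.
by apply: ler_sum => z _; rewrite normrM norm_conjC ler_wpM2r.
Qed.

Lemma norm_inner_sym (T : finType) (u v : ket R T) :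
  `|\sum_z (v z)^* * u z| = `|\sum_z (u z)^* * v z|.
Proof.
rewrite -norm_conjC rmorph_sum; congr `|_|; apply: eq_bigr => z _.
by rewrite rmorphM /= conjCK mulrC.
Qed.

Lemma AGM2_le (t x y : C) : 0 <= t -> 0 <= x -> 0 <= y ->
  t ^+ 2 <= x * y -> t *+ 2 <= x + y.
Proof.
move=> t0 x0 y0 txy.
rewrite -(ler_pXn2r (n := 2)) ?nnegrE ?addr_ge0 ?mulrn_wge0 //.
apply: le_trans (leif_le (real_leif_AGM2_scaled (ger0_real x0) (ger0_real y0))).
by rewrite exprMn_n lerMn2r txy orbT.
Qed.

Lemma cauchy_schwarz_sum (K : finType) (s p q : K -> C) :
  (forall k, 0 <= s k) -> (forall k, 0 <= p k) -> (forall k, 0 <= q k) ->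
  (forall k, s k ^+ 2 <= p k * q k) ->
  (\sum_k s k) ^+ 2 <= (\sum_k p k) * (\sum_k q k).
Proof.
move=> s0 p0 q0 spq.
have sqr_sum : (\sum_k s k) ^+ 2 = \sum_k \sum_k' s k * s k'.
  by rewrite expr2 mulr_suml; apply: eq_bigr => k _; rewrite mulr_sumr.
have sum_pq : (\sum_k p k) * (\sum_k q k) *+ 2 = \sum_k \sum_k' (p k * q k' + p k' * q k).
  under [RHS]eq_bigr => k _ do rewrite big_split.
  rewrite big_split /= mulr2n; congr (_ + _).
    by rewrite mulr_suml; apply: eq_bigr => k _; rewrite mulr_sumr.
  by rewrite [RHS]exchange_big mulr_suml; apply: eq_bigr => k _; rewrite mulr_sumr.
rewrite -(ler_pMn2r (n := 2)) // sum_pq sqr_sum -sumrMnl; apply: ler_sum => k _.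
rewrite -sumrMnl; apply: ler_sum => k' _.
apply: AGM2_le; rewrite ?mulr_ge0 // exprMn.
have -> : p k * q k' * (p k' * q k) = p k * q k * (p k' * q k') by ring.
by rewrite ler_pM ?exprn_ge0.
Qed.

(* Entrywise [|P x y| <= sqrt (P x x P y y)], then Cauchy-Schwarz over [J] and
   within each column. *)
Lemma sum_norm_mul_psd_le (K J : finType) (P Q : op R (K * J)%type) : psd P -> psd Q ->
  \sum_x \sum_y `|P x y| * `|Q x y| <=
  #|J|%:R * \sum_j (\sum_k P (k, j) (k, j)) * (\sum_k Q (k, j) (k, j)).
Proof.
move=> psdP psdQ.
have P0 x : 0 <= P x x by case: (psd_minor2 x x psdP).
have Q0 x : 0 <= Q x x by case: (psd_minor2 x x psdQ).
pose r x := sqrtC (P x x * Q x x).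
have r0 x : 0 <= r x by rewrite sqrtC_ge0 mulr_ge0.
have r_sqr x : r x ^+ 2 = P x x * Q x x by rewrite sqrtCK.
have entry_le x y : `|P x y| * `|Q x y| <= r x * r y.
  rewrite -(ler_pXn2r (n := 2)) ?nnegrE ?mulr_ge0 // !exprMn !r_sqr.
  case: (psd_minor2 x y psdP) => _ _ Pxy; case: (psd_minor2 x y psdQ) => _ _ Qxy.
  have -> : P x x * Q x x * (P y y * Q y y) = P x x * P y y * (Q x x * Q y y) by ring.
  by rewrite ler_pM ?exprn_ge0.
apply: le_trans (_ : \sum_x \sum_y r x * r y <= _).
  by apply: ler_sum => x _; apply: ler_sum => y _; exact: entry_le.
pose t j := \sum_k r (k, j).
have -> : \sum_x \sum_y r x * r y = (\sum_j t j) ^+ 2.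
  have sum_r : \sum_x r x = \sum_j t j by rewrite sum_pair exchange_big.
  by rewrite expr2 -sum_r mulr_suml; apply: eq_bigr => x _; rewrite mulr_sumr.
apply: le_trans (_ : (\sum_j t j ^+ 2) * (\sum_(j : J) 1) <= _).
  by apply: cauchy_schwarz_sum => // j; rewrite ?exprn_ge0 ?sumr_ge0 ?mulr1.
rewrite sumr_const mulrC ler_wpM2l ?ler0n //.
by apply: ler_sum => j _; apply: cauchy_schwarz_sum => // k; rewrite r_sqr.
Qed.

End Estimates.

Section Bipartition.
Variable R : realType.
Local Notation C := R[i].
Variable d : nat.
Local Notation A := (Areg d).
Local Notation I2 := ('I_d * 'I_d)%type.
Variable S : {set 'I_3}.

Lemma tensS_munit (N1 : op R (loc d S) -> op R (loc d S))
  (N2 : op R (loc d (~: S)) -> op R (loc d (~: S))) (a b x y : A) :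
  tensS N1 N2 (munit R a b) x y =
  N1 (munit R (res S a) (res S b)) (res S x) (res S y) *
  N2 (munit R (res (~: S) a) (res (~: S) b)) (res (~: S) x) (res (~: S) y).
Proof.
rewrite /tensS (eq_bigr (fun a' => (a' == a)%:R * \sum_b' (b' == b)%:R *
   (N1 (munit R (res S a') (res S b')) (res S x) (res S y) *
    N2 (munit R (res (~: S) a') (res (~: S) b')) (res (~: S) x) (res (~: S) y)))).
  by rewrite !sum_deltal.
move=> a' _; rewrite mulr_sumr; apply: eq_bigr => b' _.
by rewrite /munit -mulnb natrM; ring.
Qed.

Definition glue (k k' : 'I_d) : A := [ffun t => if t \in S then k else k'].

Lemma res_glue k k' : res S (glue k k') = res S (cst3 k).
Proof. by apply/ffunP => t; rewrite !ffunE (valP t). Qed.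

Lemma resC_glue k k' : res (~: S) (glue k k') = res (~: S) (cst3 k').
Proof. by apply/ffunP => t; have := valP t; rewrite !ffunE in_setC => /negbTE ->. Qed.

Lemma glue_inj : S != set0 -> ~: S != set0 -> injective (fun p : I2 => glue p.1 p.2).
Proof.
move=> /set0Pn[s0 s0S] /set0Pn[s1]; rewrite in_setC => /negbTE s1S [k1 k1'] [k2 k2'] /= e.
have := congr1 (fun f : A => f s0) e; have := congr1 (fun f : A => f s1) e.
by rewrite !ffunE s0S s1S => -> ->.
Qed.

(* [glue] is injective, so the left-hand side is a subsum of the right-hand one. *)
Lemma sum_res_cst3_le (f : loc d S -> C) (g : loc d (~: S) -> C) :
  S != set0 -> ~: S != set0 -> (forall x, 0 <= f (res S x) * g (res (~: S) x)) ->
  (\sum_k f (res S (cst3 k))) * (\sum_k g (res (~: S) (cst3 k))) <=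
  \sum_x f (res S x) * g (res (~: S) x).
Proof.
move=> S0 SC0; set h := fun x => f (res S x) * g (res (~: S) x) => h0.
have -> : (\sum_k f (res S (cst3 k))) * (\sum_k g (res (~: S) (cst3 k))) =
    \sum_(x in [set glue p.1 p.2 | p : I2]) h x.
  rewrite big_imset /=; last by move=> p q _ _; apply: glue_inj.
  rewrite sum_pair mulr_suml; apply: eq_bigr => k _; rewrite mulr_sumr.
  by apply: eq_bigr => k' _; rewrite /h res_glue resC_glue.
rewrite [X in _ <= X](bigID (mem [set glue p.1 p.2 | p : I2])) /=.
by rewrite lerDl sumr_ge0 // => x _; apply: h0.
Qed.

End Bipartition.

Section SeparableChannel.
Variable R : realType.
Local Notation C := R[i].
Variable d : nat.
Local Notation A := (Areg d).
Local Notation I2 := ('I_d * 'I_d)%type.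

Definition ghz_local (T : {set 'I_3}) (M : op R (loc d T) -> op R (loc d T)) : op R I2 :=
  fun x y => choi M (res T (cst3 x.1), res T (cst3 x.2)) (res T (cst3 y.1), res T (cst3 y.2)).

Lemma ghz_local_psd T M : cp_map M -> psd (@ghz_local T M).
Proof.
move=> cpM; exact: (psd_comp (fun x : I2 => (res T (cst3 x.1), res T (cst3 x.2)))
  (choi_psd cpM)).
Qed.

Variables (S : {set 'I_3}) (n : nat) (wt : 'I_n -> R)
  (N1 : 'I_n -> op R (loc d S) -> op R (loc d S))
  (N2 : 'I_n -> op R (loc d (~: S)) -> op R (loc d (~: S))).
Hypotheses (S0 : S != set0) (SC0 : ~: S != set0) (wt0 : forall i, 0 <= wt i)
  (cpN1 : forall i, cp_map (N1 i)) (cpN2 : forall i, cp_map (N2 i)).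

Definition sep_channel (X : op R A) : op R A :=
  fun x y => \sum_(i < n) (wt i)%:C * tensS (N1 i) (N2 i) X x y.

Hypothesis tp : trace_preserving sep_channel.

Lemma ghz_block_sep x y : ghz_block sep_channel x y =
  \sum_i (wt i)%:C * (ghz_local (N1 i) x y * ghz_local (N2 i) x y).
Proof. by apply: eq_bigr => i _; rewrite tensS_munit. Qed.

Lemma ghz_block_sep_herm x y : ghz_block sep_channel y x = (ghz_block sep_channel x y)^*.
Proof.
rewrite !ghz_block_sep rmorph_sum; apply: eq_bigr => i _.
rewrite !rmorphM /= conjCE conjc_real.
by case: (psd_minor2 x y (ghz_local_psd (cpN1 i))) => _ -> _;
   case: (psd_minor2 x y (ghz_local_psd (cpN2 i))) => _ -> _.
Qed.

Lemma sum_ghz_local_le1 j :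
  \sum_i (wt i)%:C * ((\sum_k ghz_local (N1 i) (k, j) (k, j)) *
                      (\sum_k ghz_local (N2 i) (k, j) (k, j))) <= 1.
Proof.
have <- : trace (sep_channel (munit R (cst3 j) (cst3 j))) = 1.
  by rewrite tp /trace /munit -[RHS](sum_deltal (cst3 j) (fun=> 1)); apply: eq_bigr => x _;
     rewrite andbb mulr1.
rewrite /trace /sep_channel exchange_big /=; apply: ler_sum => i _.
rewrite -mulr_sumr ler_wpM2l ?ler0c //.
under [X in _ <= X]eq_bigr => x _ do rewrite tensS_munit.
apply: (sum_res_cst3_le
  (f := fun u => N1 i (munit R (res S (cst3 j)) (res S (cst3 j))) u u)
  (g := fun u => N2 i (munit R (res (~: S) (cst3 j)) (res (~: S) (cst3 j))) u u)) => // x.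
apply: mulr_ge0.
  by case: (psd_minor2 (res S x, res S (cst3 j)) (res S x, res S (cst3 j)) (choi_psd (cpN1 i))).
by case: (psd_minor2 (res (~: S) x, res (~: S) (cst3 j)) (res (~: S) x, res (~: S) (cst3 j))
  (choi_psd (cpN2 i))).
Qed.

Lemma sum_norm_ghz_block_sep : \sum_x \sum_y `|ghz_block sep_channel x y| <= d%:R ^+ 2.
Proof.
have w0 i : 0 <= (wt i)%:C by rewrite ler0c.
pose F i x y := `|ghz_local (N1 i) x y| * `|ghz_local (N2 i) x y|.
apply: le_trans (_ : \sum_x \sum_y \sum_i (wt i)%:C * F i x y <= _).
  apply: ler_sum => x _; apply: ler_sum => y _; rewrite ghz_block_sep.
  apply: le_trans (ler_norm_sum _ _ _) _; apply: ler_sum => i _.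
  by rewrite !normrM ger0_norm.
have -> : \sum_x \sum_y \sum_i (wt i)%:C * F i x y =
    \sum_i (wt i)%:C * \sum_x \sum_y F i x y.
  under eq_bigr => x _ do rewrite exchange_big.
  rewrite exchange_big; apply: eq_bigr => i _.
  by rewrite mulr_sumr; apply: eq_bigr => x _; rewrite mulr_sumr.
apply: le_trans (_ : \sum_i (wt i)%:C * (d%:R * \sum_j
    (\sum_k ghz_local (N1 i) (k, j) (k, j)) * (\sum_k ghz_local (N2 i) (k, j) (k, j))) <= _).
  apply: ler_sum => i _; rewrite ler_wpM2l // -[d in d%:R](card_ord d).
  exact: sum_norm_mul_psd_le (ghz_local_psd (cpN1 i)) (ghz_local_psd (cpN2 i)).
under eq_bigr => i _ do rewrite mulrCA mulr_sumr.
rewrite -mulr_sumr exchange_big /= expr2 ler_wpM2l ?ler0n //.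
rewrite -[d in d%:R](card_ord d) -sumr_const; apply: ler_sum => j _.
exact: sum_ghz_local_le1.
Qed.

Lemma fid_sep_le psi phi psi' phi' (g : C) : 0 <= g ->
  ghz_expansion psi phi -> ghz_expansion psi' phi' ->
  (forall k j, `|\sum_z (phi j z)^* * phi' k z| <= g) ->
  fid_pure psi' (tens_id sep_channel (proj psi)) <= g ^+ 2 * d%:R ^+ 2.
Proof.
move=> g0 psiE psiE' overlap; rewrite (fid_ghz _ psiE psiE').
apply: le_trans (fid_pure_le ghz_block_sep_herm (fun x => overlap x.1 x.2)) _.
by rewrite ler_wpM2l ?exprn_ge0 // sum_norm_ghz_block_sep.
Qed.

End SeparableChannel.

Section ProtocolStates.
Variable R : realType.
Local Notation C := R[i].
Variable d : nat.
Hypothesis hd : (2 <= d)%N.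
Local Notation w := (omega R d).
Local Notation s := (sqrtd R d).

Lemma addI_inj (j : 'I_d) : injective (addI j).
Proof.
have d0 : (0 < d)%N by lia.
move=> l1 l2 /(congr1 val); rewrite /addI !val_insubd !ltn_pmod // => /eqP.
by rewrite eqn_modDl !modn_small // => /eqP/val_inj.
Qed.

Lemma addI_fiber (j z : 'I_d) : exists l0, forall l, (z == addI j l) = (l == l0).
Proof.
have [g addIK gK] := injF_bij (@addI_inj j).
by exists (g z) => l; rewrite -{1}[z]gK (inj_eq (@addI_inj j)) eq_sym.
Qed.

Definition Phi_fiber (l j : 'I_d) : ket R 'I_d :=
  fun z => s^-1 * (w ^+ (j * l) * (z == addI j l)%:R).

Definition Xi0_fiber (t j : 'I_d) : ket R 'I_d :=
  fun z => s^-1 * \sum_(l : 'I_d) w ^+ (t * l) * Phi_fiber l j z.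

Definition Xi_fiber (b : bool) (p : {perm 'I_d}) (m : 'I_d) : 'I_d -> ket R 'I_d :=
  if b then Phi_fiber (p m) else Xi0_fiber (p m).

Lemma Phi_ghz (l : 'I_d) : ghz_expansion (Phi R l) (Phi_fiber l).
Proof.
move=> x; rewrite /Phi mulr_sumr; apply: eq_bigr => j _.
by rewrite -mulnb natrM /Phi_fiber; ring.
Qed.

Lemma Xi_ghz b (p : {perm 'I_d}) m : ghz_expansion (Xi R b p m) (Xi_fiber b p m).
Proof.
case: b; first exact: Phi_ghz.
move=> x; rewrite /Xi /Xi_fiber /Xi0_fiber.
under eq_bigr => l _ do rewrite Phi_ghz mulr_sumr.
rewrite exchange_big mulr_sumr; apply: eq_bigr => j _ /=.
by rewrite !mulr_sumr; apply: eq_bigr => l _; ring.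
Qed.

Lemma sum_norm_Phi_fiber (l j : 'I_d) : \sum_z `|Phi_fiber l j z| = s^-1.
Proof.
rewrite -[RHS](sum_deltal (addI j l) (fun=> s^-1)); apply: eq_bigr => z _.
by rewrite !normrM norm_invsqrtd norm_omegaX normr_nat mul1r mulrC.
Qed.

(* Only [l] with [j + l = z] contributes to the defining sum. *)
Lemma norm_Xi0_fiber (t j z : 'I_d) : `|Xi0_fiber t j z| = d%:R^-1.
Proof.
have [l0 fiber] := addI_fiber j z.
rewrite /Xi0_fiber /Phi_fiber (eq_bigr (fun l : 'I_d =>
  w ^+ (t * l) * (s^-1 * w ^+ (j * l)) * (l == l0)%:R)); last by move=> l _; rewrite fiber; ring.
by rewrite sum_deltar !normrM norm_invsqrtd !norm_omegaX mul1r mulr1 invsqrtd_sqr.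
Qed.

Lemma norm_Xi_overlap b (p p' : {perm 'I_d}) m k j :
  `|\sum_z (Xi_fiber b p m j z)^* * Xi_fiber (~~ b) p' m k z| <= d%:R^-1 * s^-1.
Proof.
have Xi0_le t j' z : `|Xi0_fiber t j' z| <= d%:R^-1 by rewrite norm_Xi0_fiber.
case: b; rewrite /Xi_fiber /=.
  by rewrite norm_inner_sym; apply: le_trans (norm_inner_le _ (Xi0_le _ _)) _;
     rewrite sum_norm_Phi_fiber.
by apply: le_trans (norm_inner_le _ (Xi0_le _ _)) _; rewrite sum_norm_Phi_fiber.
Qed.

End ProtocolStates.

Theorem theorem1 (R : realType) (d : nat) (hd : (2 <= d)%N) :
  (* (i) perfect hiding *)
  (forall (E : finType) (rho : op R ('I_d * E)%type),
      is_state rho ->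
      commit false rho = commit true rho /\
      (forall E0 E1 : op R ('I_d * E)%type, povm2 E0 E1 ->
         guess_prob rho E0 E1 <= 2^-1)) /\
  (* (ii) 1/d-honest-binding against separable operations on A *)
  (forall (N : op R (Areg d) -> op R (Areg d)), separable_channel N ->
   forall (b : bool) (p p' : {perm 'I_d}) (m : 'I_d),
     fid_pure (Xi R (~~ b) p' m) (tens_id N (proj (Xi R b p m)))
       <= (d%:R)^-1).
Proof.
split=> [E rho [_ tr1]|N [S [S0 SC0 [n [wt [N1 [N2 [sepN _ -> tp]]]]]]] b p p' m].
  split; first exact: commit_hiding.
  by move=> E0 E1 povmE; rewrite guess_prob_half.
have wt0 i : 0 <= wt i by case: (sepN i).
have cpN1 i : cp_map (N1 i) by case: (sepN i) => _ [].
have cpN2 i : cp_map (N2 i) by case: (sepN i) => _ [].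
have g0 : 0 <= d%:R^-1 * (sqrtd R d)^-1 :> R[i].
  by rewrite mulr_ge0 ?invr_ge0 ?ler0n // ltW ?sqrtd_gt0.
apply: le_trans (fid_sep_le S0 SC0 wt0 cpN1 cpN2 tp g0 (Xi_ghz R b p m)
  (Xi_ghz R (~~ b) p' m) (norm_Xi_overlap R hd b p p' m)) _.
by rewrite exprMn !exprVn sqrtd_sqr mulrAC mulVf ?mul1r // expf_neq0 ?natd_neq0.
Qed.
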